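(* Let $\Gamma$ be a distance-regular graph with diameter $D\ge3$ and $a_1\ne0$. Let $\sigma_0,\dots,\sigma_D$ and $\rho_0,\dots,\rho_D$ be nontrivial pseudo cosine sequences forming a tight pair, with auxiliary parameter $\varepsilon$. Then for each $i$ with $1\le i\le D-1$ the following are equivalent: (i) $\sigma_{i-1}=\varepsilon\sigma_i$; (ii) $\sigma_{i+1}=\varepsilon\sigma_i$; (iii) $\sigma_{i-1}=\sigma_{i+1}$; (iv) $\rho_i=0$.
   Context: $\Gamma$ is a finite connected undirected graph without loops or multiple edges, distance-regular with diameter $D$, intersection numbers $a_i,b_i,c_i$ ($c_0=0$, $b_D=0$), valency $k$, $c_i+a_i+b_i=k$. For $\theta\in\mathbb{R}$ the pseudo cosine sequence for $\theta$ is the sequence of reals $\sigma_0,\dots,\sigma_D$ with $\sigma_0=1$ and $c_i\sigma_{i-1}+a_i\sigma_i+b_i\sigma_{i+1}=\theta\sigma_i$ for $0\le i\le D-1$; nontrivial means $\sigma_1\ne1$. Pseudo cosine sequences $\sigma_i$, $\rho_i$ form a tight pair if $(\sigma_i\rho_i)_{i=0}^D$ is a pseudo cosine sequence. For a tight pair of nontrivial pseudo cosine sequences, an auxiliary parameter is a real $\varepsilon$ with $\sigma_i\rho_i-\sigma_{i-1}\rho_{i-1}=\varepsilon(\sigma_{i-1}\rho_i-\sigma_i\rho_{i-1})$ for $1\le i\le D$. *)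

From mathcomp Require Import all_boot all_order all_algebra.
Set Implicit Arguments. Unset Strict Implicit. Unset Printing Implicit Defensive.
Import Order.TTheory GRing.Theory Num.Theory.

Section Graph.
Variables (T : finType) (e : rel T).

Fixpoint ball (x : T) (n : nat) : {set T} :=
  if n is n'.+1 then ball x n' :|: [set z | [exists w in ball x n', e w z]]
  else [set x].

(* path-length distance: least n with y in ball x n (searched among
   0..#|T|-1, which suffices in a connected graph) *)
Definition dist (x y : T) : nat :=
  find (fun n => y \in ball x n) (iota 0 #|T|).

Definition is_drg (D : nat) (a b c : nat -> nat) : Prop :=
  [/\ symmetric e, irreflexive e, (forall x y, connect e x y),
      ((forall x y, dist x y <= D)%N /\ exists x y, dist x y = D) &
      forall x y,
        [/\ #|[set z | e y z & (dist x z).+1 == dist x y]| = c (dist x y),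
            #|[set z | e y z & dist x z == dist x y]| = a (dist x y) &
            #|[set z | e y z & dist x z == (dist x y).+1]| = b (dist x y)]].
End Graph.

Local Open Scope ring_scope.

(* pseudo cosine sequence for theta (indices 0..D; sigma (i.-1) at i = 0
   is multiplied by c_0 = 0) *)
Definition pseudo_cosine (R : realFieldType) (D : nat) (a b c : nat -> nat)
  (theta : R) (sigma : nat -> R) : Prop :=
  sigma 0%N = 1 /\
  forall i : nat, (i < D)%N ->
    (c i)%:R * sigma i.-1 + (a i)%:R * sigma i + (b i)%:R * sigma i.+1
      = theta * sigma i.

Definition is_pseudo_cosine (R : realFieldType) (D : nat) (a b c : nat -> nat)
  (sigma : nat -> R) : Prop :=
  exists theta : R, pseudo_cosine D a b c theta sigma.

Definition nontrivial_pcs (R : realFieldType) (D : nat) (a b c : nat -> nat)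
  (sigma : nat -> R) : Prop :=
  is_pseudo_cosine D a b c sigma /\ sigma 1%N != 1.

Definition tight_pair (R : realFieldType) (D : nat) (a b c : nat -> nat)
  (sigma rho : nat -> R) : Prop :=
  is_pseudo_cosine D a b c sigma /\ is_pseudo_cosine D a b c rho /\
  is_pseudo_cosine D a b c (fun i => sigma i * rho i).

Definition auxiliary_parameter (R : realFieldType) (D : nat)
  (sigma rho : nat -> R) (eps : R) : Prop :=
  forall i : nat, (1 <= i <= D)%N ->
    sigma i * rho i - sigma i.-1 * rho i.-1
      = eps * (sigma i.-1 * rho i - sigma i * rho i.-1).

(* The intersection numbers satisfy c_0 = a_0 = 0, c_i + a_i + b_i = k, c_i > 0,
   b_i > 0 and, because a_1 <> 0, a_i > 0 for 0 < i < D.  Hence a pseudo cosine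
   sequence obeys c_i s_{i-1} + a_i s_i + b_i s_{i+1} = k s_1 s_i and never has
   two consecutive zeros.  The auxiliary relation at i can be written
   rho_i (sigma_i - eps sigma_{i-1}) = rho_{i-1} (sigma_{i-1} - eps sigma_i).
   For eps = 1 (resp. -1) it factors as (sigma_j - sigma_{j-1})(rho_j + rho_{j-1}) = 0
   (resp. with sigma and rho exchanged), which the recurrences at j = 1, 2, 3
   rule out; so eps^2 <> 1.  Then (i) and (ii) are each equivalent to (iv) by the
   auxiliary relations at i and i+1.  For (iii) => (iv), eliminating sigma_{i+1},
   rho_{i-1}, rho_{i+1} between the recurrences at i and the auxiliary relations
   at 1, i, i+1 gives rho_i sigma_i a_i k (sigma_1 - 1)(rho_1 - 1) = 0, and
   sigma_i <> 0 since sigma_{i-1} = sigma_{i+1}. *)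

From mathcomp Require Import all_boot all_order all_algebra.
From mathcomp Require Import zify ring lra.
Set Implicit Arguments. Unset Strict Implicit. Unset Printing Implicit Defensive.
Import Order.TTheory GRing.Theory Num.Theory.

Section Distance.
Variables (T : finType) (e : rel T).

Lemma ball_mono x n m : (n <= m)%N -> ball e x n \subset ball e x m.
Proof.
elim: m => [|m IHm]; first by rewrite leqn0 => /eqP->.
rewrite leq_eqVlt => /orP[/eqP-> //|/IHm sub_nm].
exact: subset_trans sub_nm (subsetUl _ _).
Qed.

Lemma ball_adj x n y z : y \in ball e x n -> e y z -> z \in ball e x n.+1.
Proof. by move=> yx yz; rewrite /= !inE; apply/orP; right; apply/existsP; exists y; rewrite yx. Qed.

Lemma ball_trans x y z n m :
  y \in ball e x n -> z \in ball e y m -> z \in ball e x (n + m).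
Proof.
move=> yx; elim: m z => [|m IHm] z; first by rewrite /= inE addn0 => /eqP->.
rewrite /= !inE addnS => /orP[/IHm zx|/existsP[w /andP[/IHm wx wz]]].
  exact: subsetP (ball_mono x (leqnSn _)) z zx.
exact: ball_adj wx wz.
Qed.

Lemma dist_le_ball x y n : y \in ball e x n -> (dist e x y <= n)%N.
Proof.
move=> yx; rewrite /dist; have [nT|Tn] := ltnP n #|T|.
  rewrite leqNgt; apply/negP => /(before_find 0%N).
  by rewrite nth_iota // add0n yx.
by apply: leq_trans (find_size _ _) _; rewrite size_iota.
Qed.

Lemma path_last_ball x p : path e x p -> last x p \in ball e x (size p).
Proof.
elim/last_ind: p => [|p z IHp]; first by rewrite /= inE.
rewrite rcons_path last_rcons size_rcons => /andP[/IHp px pz].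
exact: ball_adj px pz.
Qed.

Lemma dist_xx x : dist e x x = 0%N.
Proof. by apply/eqP; rewrite -leqn0 dist_le_ball //= inE. Qed.

Hypothesis econn : forall x y, connect e x y.

Lemma dist_lt_card x y : (dist e x y < #|T|)%N.
Proof.
have /connectP[p + ->] := econn x y.
case/shortenP => q xq uq _.
apply: leq_ltn_trans (dist_le_ball (path_last_ball xq)) _.
by have := max_card (mem (x :: q)); rewrite (card_uniqP uq).
Qed.

Lemma ball_dist x y : y \in ball e x (dist e x y).
Proof.
have has_ball : has (fun n => y \in ball e x n) (iota 0 #|T|).
  by rewrite has_find size_iota dist_lt_card.
by have := nth_find 0%N has_ball; rewrite nth_iota ?add0n ?dist_lt_card.
Qed.

Lemma mem_ball x y n : (y \in ball e x n) = (dist e x y <= n)%N.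
Proof.
apply/idP/idP; first exact: dist_le_ball.
by move/ball_mono/subsetP; apply; apply: ball_dist.
Qed.

Lemma dist_triangle x y z : (dist e x z <= dist e x y + dist e y z)%N.
Proof. by rewrite -mem_ball; apply: ball_trans (ball_dist x y) (ball_dist y z). Qed.

Lemma dist_adj x y z : e y z -> (dist e x z <= (dist e x y).+1)%N.
Proof. by rewrite -mem_ball; apply: ball_adj (ball_dist x y). Qed.

Lemma dist_eq0 x y : dist e x y = 0%N -> y = x.
Proof. by move=> xy0; have := ball_dist x y; rewrite xy0 /= inE => /eqP. Qed.

Hypothesis esym : symmetric e.

Lemma dist_pred x y d : dist e x y = d.+1 -> exists2 w, e y w & dist e x w = d.
Proof.
move=> xy; have := ball_dist x y; rewrite xy /= inE mem_ball xy ltnn /= inE.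
case/existsP => w /andP[wx wy]; exists w; first by rewrite esym.
by apply/eqP; rewrite eqn_leq -mem_ball wx -ltnS -xy dist_adj.
Qed.

Lemma dist_split x y n j :
  dist e x y = (n + j)%N -> exists2 w, dist e x w = n & (dist e w y <= j)%N.
Proof.
elim: j y => [|j IHj] y; first by rewrite addn0 => xy; exists y; rewrite ?dist_xx.
rewrite addnS => /dist_pred[z yz /IHj[w xw wz]]; exists w => //.
by rewrite -mem_ball; apply: ball_adj (_ : z \in _) _; rewrite ?mem_ball // esym.
Qed.

Hypothesis eirr : irreflexive e.

Lemma dist_eq1 x y : (dist e x y == 1%N) = e x y.
Proof.
apply/eqP/idP => [/dist_pred[w yw /dist_eq0 wx]|xy]; first by rewrite esym -wx.
apply/eqP; rewrite eqn_leq lt0n; have := dist_adj x xy; rewrite dist_xx => -> /=.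
by apply/eqP => /dist_eq0 yx; rewrite yx eirr in xy.
Qed.

End Distance.

Section DistanceRegular.
Variables (T : finType) (e : rel T) (D : nat) (a b c : nat -> nat).
Hypothesis drg : is_drg e D a b c.

Let esym : symmetric e. Proof. by case: drg. Qed.
Let eirr : irreflexive e. Proof. by case: drg. Qed.
Let econn : forall x y, connect e x y. Proof. by case: drg. Qed.

Let card_c x y :
  #|[set z | e y z & (dist e x z).+1 == dist e x y]| = c (dist e x y).
Proof. by case: drg => _ _ _ _ /(_ x y) []. Qed.

Let card_a x y : #|[set z | e y z & dist e x z == dist e x y]| = a (dist e x y).
Proof. by case: drg => _ _ _ _ /(_ x y) []. Qed.

Let card_b x y :
  #|[set z | e y z & dist e x z == (dist e x y).+1]| = b (dist e x y).
Proof. by case: drg => _ _ _ _ /(_ x y) []. Qed.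

Let card_neighbours y (P : pred T) :
  #|[set z | e y z & P z]| = (\sum_(z | e y z) P z)%N.
Proof. by rewrite -sum1_card (eq_bigl _ _ (in_set _)) big_mkcondr. Qed.

Lemma drg_dist_realized d : (d <= D)%N -> exists x y, dist e x y = d.
Proof.
case: drg => _ _ _ [_ [x [y xy]]] _ dD.
have [w xw _] : exists2 w, dist e x w = d & (dist e w y <= D - d)%N.
  by apply: (dist_split econn esym); rewrite ?subnKC.
by exists x, w.
Qed.

Lemma drg_c0 : c 0%N = 0%N.
Proof.
have [x [y xy]] := drg_dist_realized (leq0n D).
by rewrite -xy -card_c xy; apply/eqP; rewrite cards_eq0; apply/eqP/setP => z; rewrite !inE andbF.
Qed.

Lemma drg_a0 : a 0%N = 0%N.
Proof.
have [x [y /(dist_eq0 econn) yx]] := drg_dist_realized (leq0n D).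
rewrite -(dist_xx e x) -card_a dist_xx; apply/eqP; rewrite cards_eq0; apply/eqP/setP => z.
by rewrite !inE; apply/andP => -[xz /eqP/(dist_eq0 econn) zx]; rewrite zx eirr in xz.
Qed.

Lemma drg_valency d : (d <= D)%N -> (c d + a d + b d)%N = b 0%N.
Proof.
case/drg_dist_realized => x [y <-].
have := card_b y y; rewrite dist_xx => <-.
rewrite -card_c -card_a -card_b !card_neighbours.
rewrite -!big_split; apply: eq_bigr => z yz /=.
rewrite (dist_eq1 econn esym eirr).
rewrite yz; have := dist_adj econn x yz; rewrite esym in yz.
have := dist_adj econn x yz; lia.
Qed.

Lemma drg_c_gt0 d : (0 < d <= D)%N -> (0 < c d)%N.
Proof.
case: d => // d /drg_dist_realized[x [y xy]].
have [w yw xw] := dist_pred econn esym xy.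
rewrite -xy -card_c; apply/card_gt0P; exists w; by rewrite !inE yw xw xy /=.
Qed.

Lemma drg_b_gt0 d : (d < D)%N -> (0 < b d)%N.
Proof.
move=> /drg_dist_realized[x [y xy]].
have [w yw xw] := dist_pred econn esym xy.
rewrite -xw -card_b; apply/card_gt0P; exists y; by rewrite !inE esym yw xw xy /=.
Qed.

Lemma drg_a_gt0 : a 1%N <> 0%N -> forall d, (0 < d < D)%N -> (0 < a d)%N.
Proof.
(* With [dist z v = d + 1], [x ~ v] at distance [d] from [z] and [w] a common
   neighbour of [x] and [v]: either [w] witnesses [a_d] for [(z, x)], or it is at
   distance [d + 1] from [z] and witnesses [a_d] for [(x1, v)], where [x1] is the
   neighbour of [z] on a geodesic to [x]. *)
move=> a1 [//|d] /drg_dist_realized[z [v zv]].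
have [x vx zx] := dist_pred econn esym zv.
have [x1 zx1 x1x] : exists2 x1, dist e z x1 = 1%N & (dist e x1 x <= d)%N.
  by apply: (dist_split econn esym); rewrite zx add1n.
have [w vw xw] : exists2 w, e v w & e x w.
  have xv1 : dist e x v = 1%N by apply/eqP; rewrite (dist_eq1 econn esym eirr) esym.
  have /card_gt0P[w] : (0 < #|[set z | e v z & dist e x z == dist e x v]|)%N.
    by rewrite card_a xv1 lt0n; apply/eqP.
  by rewrite !inE xv1 (dist_eq1 econn esym eirr) => /andP[]; exists w.
have zw_lb : (dist e z v <= (dist e z w).+1)%N by apply: (dist_adj econn); rewrite esym.
have zw_ub : (dist e z w <= (dist e z x).+1)%N by apply: (dist_adj econn).
have [zwx|zwv] : dist e z w = dist e z x \/ dist e z w = dist e z v by lia.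
  rewrite -zx -card_a; apply/card_gt0P; exists w; by rewrite !inE xw zwx /=.
have x1v_ub : (dist e x1 v <= (dist e x1 x).+1)%N by apply: (dist_adj econn); rewrite esym.
have x1w_ub : (dist e x1 w <= (dist e x1 x).+1)%N by apply: (dist_adj econn).
have x1w_lb : (dist e z w <= dist e z x1 + dist e x1 w)%N by apply: (dist_triangle econn).
have x1v_lb : (dist e z v <= dist e z x1 + dist e x1 v)%N by apply: (dist_triangle econn).
have x1vd : dist e x1 v = d.+1 by lia.
rewrite -x1vd -card_a; apply/card_gt0P; exists w; rewrite !inE vw /=; apply/eqP; lia.
Qed.

End DistanceRegular.

Local Open Scope ring_scope.

Lemma symmetric_step_eq0 (R : comPzRingType) (C A B u v w r y s1 r1 eps : R) :
  C * u + A * v + B * u = (C + A + B) * s1 * v ->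
  C * w + A * r + B * y = (C + A + B) * r1 * r ->
  r * (v - eps * u) = w * (u - eps * v) ->
  y * (u - eps * v) = r * (v - eps * u) ->
  r1 * (s1 - eps) = 1 - eps * s1 ->
  r * v * (A * (C + A + B) * (s1 - 1) * (r1 - 1)) = 0.
Proof.
move=> Es Er Ei Ey E1.
have -> : r * v * (A * (C + A + B) * (s1 - 1) * (r1 - 1)) =
  - (C + B) * (u - eps * v) * (C * w + A * r + B * y - (C + A + B) * r1 * r)
  - (C + B) * C * (r * (v - eps * u) - w * (u - eps * v))
  + (C + B) * B * (y * (u - eps * v) - r * (v - eps * u))
  - r * ((C + A + B) * r1 - A + eps * (C + B))
      * (C * u + A * v + B * u - (C + A + B) * s1 * v)
  - (C + B) * (C + A + B) * v * r * (r1 * (s1 - eps) - (1 - eps * s1)) by ring.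
by rewrite Es Er Ey Ei E1 !subrr; ring.
Qed.

Section PseudoCosine.
Variables (R : realFieldType) (D : nat) (a b c : nat -> nat).
Hypotheses (c0 : c 0%N = 0%N) (a0 : a 0%N = 0%N).
Hypothesis valency : forall d, (d <= D)%N -> (c d + a d + b d)%N = b 0%N.
Hypothesis c_gt0 : forall d, (0 < d <= D)%N -> (0 < c d)%N.

Local Notation k := ((b 0%N)%:R : R).

Lemma pcs0 (s : nat -> R) : is_pseudo_cosine D a b c s -> s 0%N = 1.
Proof. by case=> th []. Qed.

Lemma pcs_rec (s : nat -> R) : is_pseudo_cosine D a b c s -> forall i, (i < D)%N ->
  (c i)%:R * s i.-1 + (a i)%:R * s i + (b i)%:R * s i.+1 = k * s 1%N * s i.
Proof.
case=> th [s0 rec] i iD; rewrite rec //; congr (_ * _).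
have := rec 0%N (leq_ltn_trans (leq0n i) iD).
by rewrite c0 a0 s0 !mul0r !add0r mulr1 => ->.
Qed.

Lemma pcs_succ_neq0 (s : nat -> R) j : is_pseudo_cosine D a b c s ->
  (j < D)%N -> s j = 0 -> s j.+1 != 0.
Proof.
move=> spcs; elim: j => [|j IHj] jD sj0.
  by move: sj0; rewrite (pcs0 spcs) => /eqP; rewrite oner_eq0.
apply/eqP => sj1; have := pcs_rec spcs jD.
rewrite sj0 sj1 /= !mulr0 !addr0 => /eqP; rewrite mulf_eq0 pnatr_eq0 eqn0Ngt c_gt0 ?(ltnW jD) //=.
by move/eqP/(IHj (ltnW jD)); rewrite sj0 eqxx.
Qed.

Lemma pcs_pred_neq0 (s : nat -> R) j : is_pseudo_cosine D a b c s ->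
  (j < D)%N -> s j.+1 = 0 -> s j != 0.
Proof. by move=> spcs jD sj1; apply/eqP => /(pcs_succ_neq0 spcs jD); rewrite sj1 eqxx. Qed.

Lemma pcs_neq0_of_pred_eq_succ (s : nat -> R) i : is_pseudo_cosine D a b c s ->
  (0 < i < D)%N -> s i.-1 = s i.+1 -> s i != 0.
Proof.
move=> spcs /andP[i_gt0 iD] sym; apply/eqP => si0.
have := pcs_rec spcs iD; rewrite -sym si0 !mulr0 addr0 -mulrDl => /eqP.
rewrite mulf_eq0 -natrD pnatr_eq0 addn_eq0 eqn0Ngt c_gt0 ?i_gt0 ?(ltnW iD) //=.
have iD' : (i.-1 < D)%N by rewrite (leq_ltn_trans (leq_pred i)).
by move/eqP/(pcs_succ_neq0 spcs iD'); rewrite prednK // si0 eqxx.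
Qed.

Hypothesis D_gt2 : (2 < D)%N.
Hypothesis a_gt0 : forall d, (0 < d < D)%N -> (0 < a d)%N.
Hypothesis b_gt0 : forall d, (d < D)%N -> (0 < b d)%N.

Let k_eq d : (d <= D)%N -> k = (c d)%:R + (a d)%:R + (b d)%:R.
Proof. by move=> dD; rewrite -!natrD valency. Qed.

Let D_gt1 : (1 < D)%N. Proof. exact: ltnW D_gt2. Qed.

Lemma pcs2_of_pcs1_eqN1 (g : nat -> R) : is_pseudo_cosine D a b c g ->
  g 1%N = -1 -> (b 1%N)%:R * (g 2%N - 1) = 2 * (a 1%N)%:R.
Proof.
move=> gpcs g1; have := pcs_rec gpcs D_gt1.
by rewrite /= (pcs0 gpcs) g1 (k_eq (ltnW D_gt1)); lra.
Qed.

Lemma pcs1_eq1_of_const (f : nat -> R) : is_pseudo_cosine D a b c f ->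
  f 2%N = f 1%N -> f 3%N = f 1%N -> f 1%N = 1.
Proof.
move=> fpcs f2 f3.
have C1 : 0 < (c 1%N)%:R :> R by rewrite ltr0n c_gt0 //; lia.
have f1_neq0 : f 1%N != 0.
  apply/eqP => f10; have := pcs_rec fpcs D_gt1.
  by rewrite /= (pcs0 fpcs) f2 f10; lra.
have : k * f 1%N * (1 - f 1%N) = 0.
  by have := pcs_rec fpcs D_gt2; rewrite /= f2 f3 (k_eq (ltnW D_gt2)); lra.
have b0_gt0 : (0 < b 0%N)%N by apply: b_gt0; lia.
move/eqP; rewrite !mulf_eq0 (negbTE f1_neq0) pnatr_eq0 eqn0Ngt b0_gt0 /=.
by rewrite subr_eq0 => /eqP <-.
Qed.

Lemma pcs_not_alternating (g : nat -> R) : is_pseudo_cosine D a b c g ->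
  g 1%N = -1 -> g 3%N = - g 2%N -> False.
Proof.
move=> gpcs g1 g3; have g2 := pcs2_of_pcs1_eqN1 gpcs g1.
have g2E : ((c 2%N)%:R + 2 * (a 2%N)%:R) * g 2%N = (c 2%N)%:R.
  by have := pcs_rec gpcs D_gt2; rewrite /= g1 g3 (k_eq (ltnW D_gt2)); lra.
have : (b 1%N)%:R * (c 2%N)%:R = ((b 1%N)%:R + 2 * (a 1%N)%:R) * ((c 2%N)%:R + 2 * (a 2%N)%:R) :> R.
  by rewrite -{1}g2E -g2; ring.
have C2 : 0 < (c 2%N)%:R :> R by rewrite ltr0n c_gt0 //; lia.
have A1 : 0 < (a 1%N)%:R :> R by rewrite ltr0n a_gt0 //; lia.
have B1 : 0 < (b 1%N)%:R :> R by rewrite ltr0n b_gt0 //; lia.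
have A2 : 0 <= (a 2%N)%:R :> R := ler0n _ _.
nra.
Qed.

Lemma not_pcs_diff_mul_sum_eq0 (f g : nat -> R) :
  is_pseudo_cosine D a b c f -> is_pseudo_cosine D a b c g -> f 1%N != 1 ->
  ~ (forall j, (0 < j <= 3)%N -> (f j - f j.-1) * (g j + g j.-1) = 0).
Proof.
move=> fpcs gpcs f1_neq1 H.
have g1 : g 1%N = -1.
  move/eqP: (H 1%N isT); rewrite /= (pcs0 fpcs) (pcs0 gpcs) mulf_eq0 subr_eq0.
  by rewrite (negbTE f1_neq1) addr_eq0 => /eqP.
have f2 : f 2%N = f 1%N.
  move/eqP: (H 2%N isT); rewrite mulf_eq0 /= g1 subr_eq0 => /orP[/eqP // | /eqP g21].
  have A1 : 0 < (a 1%N)%:R :> R by rewrite ltr0n a_gt0 //; lia.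
  by have := pcs2_of_pcs1_eqN1 gpcs g1; rewrite (_ : g 2%N = 1) ?subrr ?mulr0; lra.
move/eqP: (H 3%N isT); rewrite mulf_eq0 /= f2 subr_eq0 addr_eq0 => /orP[/eqP f3|/eqP g3].
  by move/eqP: f1_neq1; apply; apply: pcs1_eq1_of_const.
exact: pcs_not_alternating gpcs g1 g3.
Qed.

Variables (sigma rho : nat -> R) (eps : R).
Hypotheses (sigma_pcs : is_pseudo_cosine D a b c sigma) (sigma1 : sigma 1%N != 1).
Hypotheses (rho_pcs : is_pseudo_cosine D a b c rho) (rho1 : rho 1%N != 1).
Hypothesis aux : auxiliary_parameter D sigma rho eps.

Lemma aux_paramE i : (0 < i <= D)%N ->
  rho i * (sigma i - eps * sigma i.-1) = rho i.-1 * (sigma i.-1 - eps * sigma i).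
Proof. by move/aux; lra. Qed.

Lemma aux_param_neq1 : eps != 1.
Proof.
apply/eqP => eps1; apply: (not_pcs_diff_mul_sum_eq0 sigma_pcs rho_pcs sigma1) => j j3.
have /aux_paramE : (0 < j <= D)%N by lia.
by rewrite eps1 !mul1r; lra.
Qed.

Lemma aux_param_neqN1 : eps != -1.
Proof.
apply/eqP => epsN1; apply: (not_pcs_diff_mul_sum_eq0 rho_pcs sigma_pcs rho1) => j j3.
have /aux_paramE : (0 < j <= D)%N by lia.
by rewrite epsN1 !mulN1r !opprK; lra.
Qed.

Lemma aux_param_cancel r v : r * (v - eps * (eps * v)) = 0 -> v != 0 -> r = 0.
Proof.
have -> : r * (v - eps * (eps * v)) = r * v * ((1 - eps) * (1 + eps)) by ring.
move/eqP; rewrite !mulf_eq0 subr_eq0 addr_eq0 (eq_sym 1) (negbTE aux_param_neq1).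
by rewrite (eq_sym 1 (- eps)) eqr_oppLR (negbTE aux_param_neqN1) !orbF => /orP[/eqP|->].
Qed.

Variable i : nat.
Hypothesis i_range : (0 < i < D)%N.

Let iD : (i < D)%N. Proof. by case/andP: i_range. Qed.
Let predD : (i.-1 < D)%N. Proof. exact: leq_ltn_trans (leq_pred i) iD. Qed.
Let predK : i.-1.+1 = i. Proof. by case/andP: i_range => /prednK. Qed.

Let aux_at :
  rho i * (sigma i - eps * sigma i.-1) = rho i.-1 * (sigma i.-1 - eps * sigma i).
Proof. by apply: aux_paramE; lia. Qed.

Let aux_at_succ :
  rho i.+1 * (sigma i.+1 - eps * sigma i) = rho i * (sigma i - eps * sigma i.+1).
Proof. by apply: aux_paramE; lia. Qed.

Lemma sigma_pred_of_rho_eq0 : rho i = 0 -> sigma i.-1 = eps * sigma i.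
Proof.
move=> r0; have w_neq0 : rho i.-1 != 0.
  by apply: (pcs_pred_neq0 rho_pcs predD); rewrite predK.
move: aux_at; rewrite r0 mul0r => /esym/eqP.
by rewrite mulf_eq0 (negbTE w_neq0) subr_eq0 => /eqP.
Qed.

Lemma sigma_succ_of_rho_eq0 : rho i = 0 -> sigma i.+1 = eps * sigma i.
Proof.
move=> r0; have := pcs_succ_neq0 rho_pcs iD r0.
move: aux_at_succ; rewrite r0 mul0r => /eqP.
by rewrite mulf_eq0 subr_eq0 => /orP[/eqP->|/eqP //]; rewrite eqxx.
Qed.

Lemma rho_eq0_of_sigma_pred : sigma i.-1 = eps * sigma i -> rho i = 0.
Proof.
move=> pred_eps; apply: (aux_param_cancel (v := sigma i)).
  by rewrite -pred_eps aux_at pred_eps subrr mulr0.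
apply/eqP => v0; have u0 : sigma i.-1 = 0 by rewrite pred_eps v0 mulr0.
by have := pcs_succ_neq0 sigma_pcs predD u0; rewrite predK v0 eqxx.
Qed.

Lemma rho_eq0_of_sigma_succ : sigma i.+1 = eps * sigma i -> rho i = 0.
Proof.
move=> succ_eps; apply: (aux_param_cancel (v := sigma i)).
  by rewrite -succ_eps -aux_at_succ succ_eps subrr mulr0.
by apply/eqP => v0; have := pcs_succ_neq0 sigma_pcs iD v0; rewrite succ_eps v0 mulr0 eqxx.
Qed.

Lemma rho_eq0_of_sigma_pred_succ : sigma i.-1 = sigma i.+1 -> rho i = 0.
Proof.
move=> pred_succ; have v_neq0 := pcs_neq0_of_pred_eq_succ sigma_pcs i_range pred_succ.
have E1 : rho 1%N * (sigma 1%N - eps) = 1 - eps * sigma 1%N.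
  have /aux_paramE : (0 < 1 <= D)%N by lia.
  by rewrite /= (pcs0 sigma_pcs) (pcs0 rho_pcs) mulr1 mul1r.
have kE := k_eq (ltnW iD).
have Es := pcs_rec sigma_pcs iD; have Er := pcs_rec rho_pcs iD.
have Ey := aux_at_succ; rewrite -pred_succ kE in Es Ey; rewrite kE in Er.
have K_gt0 : 0 < (c i)%:R + (a i)%:R + (b i)%:R :> R.
  by rewrite -!natrD ltr0n !addn_gt0 c_gt0 //; lia.
have A_gt0 : 0 < (a i)%:R :> R by rewrite ltr0n a_gt0 //; lia.
move/eqP: (symmetric_step_eq0 Es Er aux_at Ey E1).
rewrite !mulf_eq0 (negbTE v_neq0) (gt_eqF A_gt0) (gt_eqF K_gt0) !subr_eq0.
by rewrite (negbTE sigma1) (negbTE rho1) !orbF => /eqP.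
Qed.

Lemma aux_param_tfae :
  [<-> sigma i.-1 = eps * sigma i; sigma i.+1 = eps * sigma i;
       sigma i.-1 = sigma i.+1; rho i = 0].
Proof.
tfae=> [/rho_eq0_of_sigma_pred/sigma_succ_of_rho_eq0 // | succ_eps | |].
- have r0 := rho_eq0_of_sigma_succ succ_eps.
  by rewrite (sigma_pred_of_rho_eq0 r0) succ_eps.
- exact: rho_eq0_of_sigma_pred_succ.
- exact: sigma_pred_of_rho_eq0.
Qed.

End PseudoCosine.

Theorem lemma11p1 (R : realFieldType) (T : finType) (e : rel T) (D : nat)
  (a b c : nat -> nat) (sigma rho : nat -> R) (eps : R) :
  is_drg e D a b c -> (3 <= D)%N -> a 1%N <> 0%N ->
  nontrivial_pcs D a b c sigma -> nontrivial_pcs D a b c rho ->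
  tight_pair D a b c sigma rho ->
  auxiliary_parameter D sigma rho eps ->
  forall i : nat, (1 <= i <= D - 1)%N ->
  [<-> sigma i.-1 = eps * sigma i;
       sigma i.+1 = eps * sigma i;
       sigma i.-1 = sigma i.+1;
       rho i = 0].
Proof.
move=> drg D_gt2 a1 [sigma_pcs sigma1] [rho_pcs rho1] _ aux i i_range.
have {}i_range : (0 < i < D)%N by lia.
exact: (aux_param_tfae (drg_c0 drg) (drg_a0 drg) (drg_valency drg) (drg_c_gt0 drg)
  D_gt2 (drg_a_gt0 drg a1) (drg_b_gt0 drg) sigma_pcs sigma1 rho_pcs rho1 aux i_range).
Qed.
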